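(* Let $\mathcal{H}=\mathbb{C}^{d_1}$, $\mathcal{K}=\mathbb{C}^{d_2}$ with $d_1\ge3$ odd, and let $\sigma_1,\dots,\sigma_{d_1d_2}\ge0$ be given. Consider the problem of minimizing $\frac1{d_1d_2}\operatorname{tr}[A\,\overline A^{T_2}]$ over all $A\in\mathcal{B}(\mathcal{H}\otimes\mathcal{K})$ with $A^T=A$ and singular values $\sigma_1,\dots,\sigma_{d_1d_2}$. Then every local minimizer $A$ of this problem satisfies that $A\,\overline A^{T_2}$ is Hermitian.
   Context: The partial transposes are taken with respect to a fixed product basis, defined by linear extension of $(X\otimes Y)^{T_1}=X^T\otimes Y$ and $(X\otimes Y)^{T_2}=X\otimes Y^T$; $\overline A$ is the entrywise complex conjugate, and $\overline A^{T_2}=(\overline A)^{T_2}$. *)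

From HB Require Import structures.
From mathcomp Require Import all_boot all_order all_algebra.
From mathcomp Require Import reals complex.
Set Implicit Arguments. Unset Strict Implicit. Unset Printing Implicit Defensive.
Import Order.TTheory GRing.Theory Num.Theory.
Local Open Scope ring_scope.

Section Defs.
Variables (R : realType) (d1 d2 : nat).
Local Notation C := (R[i]).
Local Notation n := (d1 * d2)%N.

(* fixed product basis: e_i (x) f_j  <->  index mxvec_index i j *)
Definition pidx (i : 'I_d1) (j : 'I_d2) : 'I_n := mxvec_index i j.
Definition unpidx (k : 'I_n) : 'I_d1 * 'I_d2 :=
  enum_val (cast_ord (esym (@mxvec_cast d1 d2)) k).

(* partial transpose on the second factor:
   A^{T2}_{(i,j),(i',j')} = A_{(i,j'),(i',j)} *)
Definition ptrans2 (A : 'M[C]_n) : 'M[C]_n :=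
  \matrix_(k, l) A (pidx (unpidx k).1 (unpidx l).2) (pidx (unpidx l).1 (unpidx k).2).

Definition entconj (A : 'M[C]_n) : 'M[C]_n := map_mx Num.conj A.

Definition ctrmx (A : 'M[C]_n) : 'M[C]_n := (entconj A)^T.

Definition is_hermitian (A : 'M[C]_n) : Prop := ctrmx A = A.

(* A has singular values sigma_1..sigma_n (with multiplicity): the eigenvalues
   of A^* A, counted with algebraic multiplicity, are the sigma_k^2 *)
Definition has_singular_values (A : 'M[C]_n) (sigma : 'I_n -> R) : Prop :=
  char_poly (ctrmx A *m A) = \prod_(k < n) ('X - (((sigma k) ^+ 2)%:C)%C%:P).

Definition feasible (sigma : 'I_n -> R) (A : 'M[C]_n) : Prop :=
  A^T = A /\ has_singular_values A sigma.

(* the objective (1/(d1 d2)) tr[A conj(A)^{T2}]; this trace is always real,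
   we take its real part *)
Definition objective (A : 'M[C]_n) : R :=
  complex.Re (\tr (A *m ptrans2 (entconj A))) / n%:R.

Definition abs2 (z : C) : R := complex.Re z ^+ 2 + complex.Im z ^+ 2.

Definition frob_dist2 (A B : 'M[C]_n) : R :=
  \sum_(k < n) \sum_(l < n) abs2 (A k l - B k l).

Definition local_minimizer (sigma : 'I_n -> R) (A : 'M[C]_n) : Prop :=
  feasible sigma A /\
  exists eps : R, 0 < eps /\
    forall B : 'M[C]_n, feasible sigma B -> frob_dist2 B A < eps ->
      objective A <= objective B.

End Defs.

From HB Require Import structures.
From mathcomp Require Import all_boot all_order all_algebra.
From mathcomp Require Import reals complex.
From mathcomp Require Import ring lra.
Set Implicit Arguments. Unset Strict Implicit. Unset Printing Implicit Defensive.
Import Order.TTheory GRing.Theory Num.Theory.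
Local Open Scope ring_scope.

(* Write Y := A conj(A)^{T2}.  For a Hermitian projection P and a complex c
   with |1 + c| = 1, the matrix E := 1 + cP is unitary, so B := E A E^T is
   again symmetric with the singular values of A; it is a competitor of A.
   Since A^T = A, the objective of B exceeds that of A by
   (4/n) Re (c tr(P Y)) + O(|c|^2).  Letting c tend to 0 along the unit circle
   around -1, i.e. tangentially to the imaginary axis, local minimality forces
   Im tr(P Y) = 0.  Testing this against the rank-one projections onto
   e_k + a e_l with a in {0, 1, i} shows that Y is Hermitian. *)

Lemma eq0_of_linear_quadratic_ge0 (R : realFieldType) (a M delta : R) :
  0 < delta -> (forall s, s ^+ 2 < delta -> 0 <= a * s + M * s ^+ 2) -> a = 0.
Proof.
move=> delta_gt0 ge0_near0; apply/eqP; apply/negPn/negP => a_neq0.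
have a_gt0 : 0 < `|a| by rewrite normr_gt0.
pose t := Num.min (Num.min 1 (delta / 2)) (`|a| / (`|M| + 1)).
have t_gt0 : 0 < t by rewrite !lt_min ltr01 divr_gt0 //= divr_gt0 // ltr_wpDl.
have [t_le1 t_le_delta t_le_a] : [/\ t <= 1, t <= delta / 2 & t <= `|a| / (`|M| + 1)].
  by rewrite !ge_min !lexx !orbT.
rewrite ler_pdivlMr ?ltr_wpDl // in t_le_a.
pose s := if 0 < a then - t else t.
have as_eq : a * s = - (`|a| * t).
  rewrite /s; case: ifP => [a_pos|a_npos]; first by rewrite gtr0_norm // mulrN.
  by rewrite ler0_norm ?mulNr ?opprK // leNgt a_npos.
have s2 : s ^+ 2 = t ^+ 2 by rewrite /s; case: ifP => _ //; rewrite sqrrN.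
have := ge0_near0 s; rewrite s2 as_eq.
have M_le := ler_norm M; have M_ge := ler_norm (- M); rewrite normrN in M_ge.
have t2_lt : t ^+ 2 < delta by rewrite expr2; nra.
move=> /(_ t2_lt); nra.
Qed.

Lemma char_poly_conj (F : fieldType) (m : nat) (S S' M : 'M[F]_m) :
  S' *m S = 1%:M -> char_poly (S *m M *m S') = char_poly M.
Proof.
move=> S'S; have SS' : S *m S' = 1%:M by apply: mulmx1C.
rewrite /char_poly /char_poly_mx.
set SP := map_mx polyC S; set SP' := map_mx polyC S'.
have SP_SP' : SP *m SP' = 1%:M by rewrite -map_mxM SS' map_mx1.
have SP'_SP : SP' *m SP = 1%:M by rewrite -map_mxM S'S map_mx1.
have -> : 'X%:M - map_mx polyC (S *m M *m S') =
    SP *m ('X%:M - map_mx polyC M) *m SP'.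
  rewrite !map_mxM -/SP -/SP' mulmxBr mulmxBl -!mulmxA.
  by rewrite -scalar_mxC [SP *m (SP' *m _)]mulmxA SP_SP' mul1mx.
by rewrite !det_mulmx mulrC mulrA -det_mulmx SP'_SP det1 mul1r.
Qed.

Section ComplexNumbers.
Variable R : realType.
Local Notation C := R[i].
Local Notation Re := complex.Re.
Local Notation Im := complex.Im.

Lemma ReM (x y : C) : Re (x * y) = Re x * Re y - Im x * Im y.
Proof. by case: x => a b; case: y. Qed.

Lemma ImM (x y : C) : Im (x * y) = Re x * Im y + Im x * Re y.
Proof. by case: x => a b; case: y. Qed.

Lemma ReJ (x : C) : Re (Num.conj x) = Re x.
Proof. by case: x. Qed.

Lemma ImJ (x : C) : Im (Num.conj x) = - Im x.
Proof. by case: x. Qed.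

Lemma Re_sum (I : finType) (F : I -> C) : Re (\sum_i F i) = \sum_i Re (F i).
Proof. exact: raddf_sum. Qed.

Lemma abs2_ge0 (x : C) : 0 <= abs2 x.
Proof. by rewrite /abs2 addr_ge0 // sqr_ge0. Qed.

Lemma abs2M (x y : C) : abs2 (x * y) = abs2 x * abs2 y.
Proof. rewrite /abs2 ReM ImM; ring. Qed.

Lemma abs2J (x : C) : abs2 (Num.conj x) = abs2 x.
Proof. by rewrite /abs2 ReJ ImJ sqrrN. Qed.

Lemma abs2D_le (x y : C) : abs2 (x + y) <= 2 * abs2 x + 2 * abs2 y.
Proof.
rewrite /abs2 !raddfD /=.
have := sqr_ge0 (Re x - Re y); have := sqr_ge0 (Im x - Im y); nra.
Qed.

Lemma ReM_le (x y : C) : Re (x * y) <= (abs2 x + abs2 y) / 2.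
Proof.
rewrite /abs2 ReM.
have := sqr_ge0 (Re x - Re y); have := sqr_ge0 (Im x + Im y); nra.
Qed.

Lemma conj_realC (x : R) : Num.conj (x%:C)%C = (x%:C)%C :> C.
Proof. exact: conjc_real. Qed.

Lemma mulJc (x : C) : Num.conj x * x = (abs2 x)%:C%C.
Proof.
case: x => a b; apply/eqP; rewrite eq_complex /abs2 /=.
by apply/andP; split; apply/eqP; ring.
Qed.

Lemma Im_realCM (r : R) (z : C) : Im ((r%:C)%C * z) = r * Im z.
Proof. by rewrite ImM /= mul0r addr0. Qed.

(* (1 + i s) / (1 - i s) - 1: a point of the unit circle around -1, which
   leaves 0 in the direction 2 i s. *)
Definition cayley_m1 (s : R) : C :=
  Complex (-2 * s ^+ 2 / (1 + s ^+ 2)) (2 * s / (1 + s ^+ 2)).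

Section CayleyM1.
Variable s : R.
Local Notation c := (cayley_m1 s).

Lemma cayley_m1_den_gt0 : 0 < 1 + s ^+ 2.
Proof. by rewrite ltr_pwDl // sqr_ge0. Qed.

Let den_neq0 : 1 + s ^+ 2 != 0 := lt0r_neq0 cayley_m1_den_gt0.

Lemma cayley_m1_unitary : c + Num.conj c + Num.conj c * c = 0.
Proof.
apply/eqP; rewrite eq_complex /=; apply/andP; split; apply/eqP; last by ring.
by field.
Qed.

Lemma abs2_cayley_m1 : abs2 c * (1 + s ^+ 2) = 4 * s ^+ 2.
Proof. by rewrite /abs2 /=; field. Qed.

Lemma abs2_cayley_m1_le : abs2 c <= 4 * s ^+ 2.
Proof.
rewrite -abs2_cayley_m1 ler_peMr ?abs2_ge0 //.
by rewrite lerDl sqr_ge0.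
Qed.

Lemma Re_cayley_m1M (q : C) :
  Re (c * q) * (1 + s ^+ 2) = - 2 * s ^+ 2 * Re q - 2 * s * Im q.
Proof. by rewrite ReM /=; field. Qed.

End CayleyM1.

End ComplexNumbers.

Section Bipartite.
Variables (R : realType) (d1 d2 : nat).
Local Notation C := R[i].
Local Notation n := (d1 * d2)%N.
Local Notation Re := complex.Re.
Local Notation Im := complex.Im.
Local Notation p := (@pidx d1 d2).
Local Notation u := (@unpidx d1 d2).
Local Notation ctrmx := (@ctrmx R d1 d2).
Local Notation entconj := (@entconj R d1 d2).

Lemma pidxK i j : u (p i j) = (i, j).
Proof. by rewrite /unpidx /pidx /mxvec_index cast_ordK enum_rankK. Qed.

Lemma unpidxK k : p (u k).1 (u k).2 = k.
Proof.
rewrite /unpidx /pidx /mxvec_index -surjective_pairing enum_valK.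
by rewrite cast_ordKV.
Qed.

Definition pt_form (X W : 'M[C]_n) : C := \tr (X *m ptrans2 (entconj W)).

Definition pt_swap (kl : 'I_n * 'I_n) : 'I_n * 'I_n :=
  (p (u kl.2).1 (u kl.1).2, p (u kl.1).1 (u kl.2).2).

Lemma pt_swapK : involutive pt_swap.
Proof. by case=> k l; rewrite /pt_swap /= !pidxK /= !unpidxK. Qed.

Lemma pt_formE X W : pt_form X W =
  \sum_(kl : 'I_n * 'I_n) X kl.1 kl.2 * Num.conj (W (pt_swap kl).1 (pt_swap kl).2).
Proof.
rewrite /pt_form /mxtrace; under eq_bigr do rewrite mxE.
by rewrite pair_bigA /=; apply: eq_bigr => -[k l] _ /=; rewrite !mxE.
Qed.

Lemma sum_pt_swap (V : nmodType) (F : 'I_n * 'I_n -> V) :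
  \sum_kl F (pt_swap kl) = \sum_kl F kl.
Proof. by rewrite [RHS](reindex_inj (can_inj pt_swapK)). Qed.

Lemma pt_formC X W : pt_form X W = Num.conj (pt_form W X).
Proof.
rewrite !pt_formE rmorph_sum /= -sum_pt_swap; apply: eq_bigr => kl _.
by rewrite rmorphM /= conjCK mulrC !pidxK /= !unpidxK.
Qed.

Lemma ptrans2_tr (M : 'M[C]_n) : ptrans2 M^T = (ptrans2 M)^T.
Proof. by apply/matrixP => k l; rewrite !mxE. Qed.

Lemma entconj_tr (M : 'M[C]_n) : entconj M^T = (entconj M)^T.
Proof. by apply/matrixP => k l; rewrite !mxE. Qed.

Lemma pt_form_tr X W : pt_form X^T W^T = pt_form X W.
Proof.
by rewrite /pt_form entconj_tr ptrans2_tr -trmx_mul mxtrace_tr mxtrace_mulC.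
Qed.

Lemma pt_formDl X Y W : pt_form (X + Y) W = pt_form X W + pt_form Y W.
Proof. by rewrite /pt_form mulmxDl mxtraceD. Qed.

Lemma pt_formZl a X W : pt_form (a *: X) W = a * pt_form X W.
Proof. by rewrite /pt_form -scalemxAl mxtraceZ. Qed.

Lemma pt_formDr X W V : pt_form X (W + V) = pt_form X W + pt_form X V.
Proof.
rewrite !pt_formE -big_split; apply: eq_bigr => kl _ /=.
by rewrite mxE rmorphD mulrDr.
Qed.

Definition frob2 (X : 'M[C]_n) : R :=
  \sum_(kl : 'I_n * 'I_n) abs2 (X kl.1 kl.2).

Lemma frob2_ge0 X : 0 <= frob2 X.
Proof. by apply: sumr_ge0 => kl _; exact: abs2_ge0. Qed.

Lemma frob_dist2E B A : frob_dist2 B A = frob2 (B - A).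
Proof.
rewrite /frob_dist2 /frob2 pair_bigA /=.
by apply: eq_bigr => -[k l] _ /=; rewrite !mxE.
Qed.

Lemma frob2D_le X Y : frob2 (X + Y) <= 2 * frob2 X + 2 * frob2 Y.
Proof.
rewrite /frob2 !mulr_sumr -big_split /=; apply: ler_sum => kl _.
by rewrite mxE abs2D_le.
Qed.

Lemma frob2Z a X : frob2 (a *: X) = abs2 a * frob2 X.
Proof.
by rewrite /frob2 mulr_sumr; apply: eq_bigr => kl _; rewrite mxE abs2M.
Qed.

Lemma Re_pt_form_le X : Re (pt_form X X) <= frob2 X.
Proof.
rewrite pt_formE Re_sum.
apply: (@le_trans _ _
  (\sum_kl (abs2 (X kl.1 kl.2) + abs2 (X (pt_swap kl).1 (pt_swap kl).2)) / 2)).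
  by apply: ler_sum => kl _; apply: le_trans (ReM_le _ _) _; rewrite abs2J.
rewrite -mulr_suml big_split /= (sum_pt_swap (fun kl => abs2 (X kl.1 kl.2))).
rewrite -/(frob2 X); lra.
Qed.

Lemma ctrmxD X Y : ctrmx (X + Y) = ctrmx X + ctrmx Y.
Proof. by apply/matrixP => i j; rewrite !mxE rmorphD. Qed.

Lemma ctrmxZ a X : ctrmx (a *: X) = Num.conj a *: ctrmx X.
Proof. by apply/matrixP => i j; rewrite !mxE rmorphM. Qed.

Lemma ctrmx1 : ctrmx 1%:M = 1%:M.
Proof. by rewrite /ctrmx /entconj map_mx1 trmx1. Qed.

Lemma ctrmxM X Y : ctrmx (X *m Y) = ctrmx Y *m ctrmx X.
Proof. by rewrite /ctrmx /entconj map_mxM trmx_mul. Qed.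

Lemma ctrmx_tr X : ctrmx X^T = entconj X.
Proof. by apply/matrixP => i j; rewrite !mxE. Qed.

Lemma unitary_1_addZ P c : P *m P = P -> ctrmx P = P ->
  c + Num.conj c + Num.conj c * c = 0 ->
  ctrmx (1%:M + c *: P) *m (1%:M + c *: P) = 1%:M.
Proof.
move=> PP hermP unit_c.
rewrite ctrmxD ctrmx1 ctrmxZ hermP mulmxDl mul1mx mulmxDr mulmx1.
rewrite -scalemxAl -scalemxAr PP scalerA -addrA addrA -!scalerDl -addrA.
by rewrite -scalerDl addrA unit_c scale0r addr0.
Qed.

Lemma char_poly_gram_congr E A : ctrmx E *m E = 1%:M ->
  char_poly (ctrmx (E *m A *m E^T) *m (E *m A *m E^T)) = char_poly (ctrmx A *m A).
Proof.
move=> unitE.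
have unitEt : E^T *m entconj E = 1%:M.
  by have := congr1 trmx unitE; rewrite trmx_mul trmx1 /ctrmx trmxK.
rewrite ctrmxM ctrmx_tr ctrmxM !mulmxA -[_ *m ctrmx E *m E]mulmxA unitE mulmx1.
by rewrite -[entconj E *m ctrmx A *m A]mulmxA (char_poly_conj _ unitEt).
Qed.

Lemma feasible_congr sigma E A : ctrmx E *m E = 1%:M ->
  feasible sigma A -> feasible sigma (E *m A *m E^T).
Proof.
move=> unitE [symA svA]; split; first by rewrite !trmx_mul trmxK symA mulmxA.
by rewrite /has_singular_values char_poly_gram_congr.
Qed.

Lemma congr_1_addZE (P A : 'M[C]_n) (c : C) :
  (1%:M + c *: P) *m A *m (1%:M + c *: P)^T =
  A + (c *: (P *m A + A *m P^T) + (c * c) *: (P *m A *m P^T)).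
Proof.
rewrite linearD /= trmx1 linearZ /= mulmxDl mul1mx.
rewrite !mulmxDr !mulmx1 mulmxDl -!scalemxAl -!scalemxAr.
by rewrite scalerA scalerDr !addrA.
Qed.

Lemma frob2_quadratic_le (c : C) (D1 D2 : 'M[C]_n) : abs2 c <= 1 ->
  frob2 (c *: D1 + (c * c) *: D2) <= abs2 c * (2 * frob2 D1 + 2 * frob2 D2).
Proof.
move=> c_le1; apply: le_trans (frob2D_le _ _) _; rewrite !frob2Z abs2M.
have c2_le : abs2 c * abs2 c * frob2 D2 <= abs2 c * frob2 D2.
  by rewrite ler_wpM2r ?frob2_ge0 // ler_piMr ?abs2_ge0.
lra.
Qed.

Lemma pt_form_addE X D :
  pt_form (X + D) (X + D) = pt_form X X + pt_form D X + pt_form X D + pt_form D D.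
Proof. by rewrite !pt_formDl !pt_formDr; ring. Qed.

Lemma Re_pt_form_congr_le (P A : 'M[C]_n) : A^T = A ->
  exists2 N, 0 <= N & forall c, abs2 c <= 1 ->
    let B := (1%:M + c *: P) *m A *m (1%:M + c *: P)^T in
    frob_dist2 B A <= abs2 c * N /\
    Re (pt_form B B) <= Re (pt_form A A)
      + 4 * Re (c * \tr (P *m (A *m ptrans2 (entconj A)))) + abs2 c * N.
Proof.
move=> symA; set q := \tr _.
set D1 := P *m A + A *m P^T; set D2 := P *m A *m P^T; set r := pt_form D2 A.
set K := 2 * frob2 D1 + 2 * frob2 D2.
have K_ge0 : 0 <= K by have := frob2_ge0 D1; have := frob2_ge0 D2; rewrite /K; lra.
exists (1 + abs2 r + K); first by have := abs2_ge0 r; lra.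
move=> c c_le1 /=; rewrite congr_1_addZE -/D1 -/D2.
set D := c *: D1 + _.
have frobD : frob2 D <= abs2 c * K by apply: frob2_quadratic_le.
have Kc : abs2 c * K <= abs2 c * (1 + abs2 r + K).
  by rewrite ler_wpM2l ?abs2_ge0 // lerDr addr_ge0 ?abs2_ge0.
split; first by rewrite frob_dist2E addrC addKr (le_trans frobD).
have D1A : pt_form D1 A = q + q.
  have PA : pt_form (P *m A) A = q by rewrite /pt_form -mulmxA.
  by rewrite pt_formDl PA -pt_form_tr trmx_mul trmxK symA PA.
have DA : Re (pt_form D A) = Re (c * q) + Re (c * q) + Re (c * (c * r)).
  by rewrite pt_formDl !pt_formZl D1A mulrDr mulrA !raddfD.
have Rcr : Re (c * (c * r)) <= (abs2 c + abs2 c * abs2 r) / 2.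
  by rewrite -abs2M; exact: ReM_le.
have DD : Re (pt_form D D) <= abs2 c * K := le_trans (Re_pt_form_le D) frobD.
rewrite pt_form_addE !raddfD /= [pt_form A D]pt_formC ReJ DA.
have := abs2_ge0 c; nra.
Qed.

Lemma Re_pt_form_le_of_objective A B :
  objective A <= objective B -> Re (pt_form A A) <= Re (pt_form B B).
Proof.
have [n0|n_gt0] := posnP n.
  suff pt0 X : pt_form X X = 0 by rewrite !pt0.
  by rewrite /pt_form /mxtrace big1 // => i; have : (i < 0)%N by rewrite -n0.
by rewrite /objective ler_pM2r // invr_gt0 ltr0n.
Qed.

Lemma Im_tr_proj_eq0 sigma A P : local_minimizer sigma A ->
  P *m P = P -> ctrmx P = P ->
  Im (\tr (P *m (A *m ptrans2 (entconj A)))) = 0.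
Proof.
move=> [[symA svA] [eps [eps_gt0 minA]]] PP hermP; set q := \tr _.
have [N N_ge0 expansion] := Re_pt_form_congr_le P symA.
pose delta := Num.min (1 / 4) (eps / (4 * N + 1)).
have N1_gt0 : 0 < 4 * N + 1 by lra.
have delta_gt0 : 0 < delta by rewrite lt_min !divr_gt0.
suff : - 8 * Im q = 0 by lra.
apply: (eq0_of_linear_quadratic_ge0 (M := 4 * N - 8 * Re q) delta_gt0).
move=> s s2_lt; set c := cayley_m1 s.
have [s2_le s2_le_eps] : s ^+ 2 <= 1 / 4 /\ s ^+ 2 <= eps / (4 * N + 1).
  by split; apply: ltW; apply: lt_le_trans s2_lt _; rewrite ge_min lexx ?orbT.
rewrite ler_pdivlMr // in s2_le_eps.
have c_le := abs2_cayley_m1_le s; have c_ge0 := abs2_ge0 c.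
have [dist obj] := expansion c ltac:(lra).
have dist_lt : frob_dist2 ((1%:M + c *: P) *m A *m (1%:M + c *: P)^T) A < eps.
  by apply: le_lt_trans dist _; nra.
have feasB := feasible_congr (unitary_1_addZ PP hermP (cayley_m1_unitary s))
  (conj symA svA).
have first_order :=
  le_trans (Re_pt_form_le_of_objective (minA _ feasB dist_lt)) obj.
have expand_w : (4 * Re (c * q) + abs2 c * N) * (1 + s ^+ 2) =
    4 * (- 2 * s ^+ 2 * Re q - 2 * s * Im q) + 4 * s ^+ 2 * N.
  by rewrite mulrDl -mulrA Re_cayley_m1M [abs2 c * N * _]mulrAC abs2_cayley_m1.
have slack : 0 <= 4 * Re (c * q) + abs2 c * N by lra.
have := mulr_ge0 slack (ltW (cayley_m1_den_gt0 s)).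
by rewrite expand_w; lra.
Qed.

Lemma sum_eq_natrM (F : 'I_n -> C) (k : 'I_n) : \sum_j (j == k)%:R * F j = F k.
Proof.
rewrite (bigD1 k) //= eqxx mul1r big1 ?addr0 // => j /negPf ->.
by rewrite mul0r.
Qed.

Section PairProjection.
Variables (k l : 'I_n) (a : C).
Hypothesis distinct_or_a0 : (k != l) || (a == 0).

Definition pair_vec (j : 'I_n) : C := (j == k)%:R + a * (j == l)%:R.

Local Notation r := (1 + abs2 a).

Definition pair_proj : 'M[C]_n :=
  \matrix_(i, j) ((r%:C)%C^-1 * (pair_vec i * Num.conj (pair_vec j))).

Lemma sum_pair_vecM (F : 'I_n -> C) : \sum_j pair_vec j * F j = F k + a * F l.
Proof.
rewrite /pair_vec; under eq_bigr do rewrite mulrDl -mulrA.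
by rewrite big_split /= -mulr_sumr !sum_eq_natrM.
Qed.

Lemma pair_vecJ j : Num.conj (pair_vec j) = (j == k)%:R + Num.conj a * (j == l)%:R.
Proof. by rewrite rmorphD rmorphM /= !rmorph_nat. Qed.

Lemma sum_pair_vecJM (F : 'I_n -> C) :
  \sum_j Num.conj (pair_vec j) * F j = F k + Num.conj a * F l.
Proof.
under eq_bigr do rewrite pair_vecJ mulrDl -mulrA.
by rewrite big_split /= -mulr_sumr !sum_eq_natrM.
Qed.

Lemma pair_vec_norm : \sum_j Num.conj (pair_vec j) * pair_vec j = (r%:C)%C.
Proof.
rewrite sum_pair_vecJM /pair_vec eqxx (eq_sym l k) rmorphD /= -mulJc.
case/orP: distinct_or_a0 => [/negPf -> | /eqP ->].
  by rewrite !mulr0 !addr0 eqxx add0r mulr1.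
by rewrite rmorph0 !mul0r !addr0.
Qed.

Lemma pair_proj_idem : pair_proj *m pair_proj = pair_proj.
Proof.
have r_neq0 : (r%:C)%C != 0.
  by rewrite (inj_eq (@complexI _)) lt0r_neq0 // ltr_pwDl ?abs2_ge0.
apply/matrixP => i j; rewrite !mxE; under eq_bigr do rewrite !mxE.
have -> : \sum_h ((r%:C)%C^-1 * (pair_vec i * Num.conj (pair_vec h))) *
    ((r%:C)%C^-1 * (pair_vec h * Num.conj (pair_vec j))) =
  (r%:C)%C^-1 * (pair_vec i * Num.conj (pair_vec j)) *
    ((r%:C)%C^-1 * \sum_h Num.conj (pair_vec h) * pair_vec h).
  by rewrite !mulr_sumr; apply: eq_bigr => h _; ring.
by rewrite pair_vec_norm mulVf // mulr1.
Qed.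

Lemma pair_proj_herm : ctrmx pair_proj = pair_proj.
Proof.
apply/matrixP => i j; rewrite !mxE !rmorphM fmorphV /= conj_realC conjCK.
by rewrite [pair_vec i * _]mulrC.
Qed.

Lemma tr_pair_projM (Y : 'M[C]_n) : \tr (pair_proj *m Y) =
  (r%:C)%C^-1 * (Y k k + a * Y k l + Num.conj a * Y l k + Num.conj a * a * Y l l).
Proof.
have -> : \tr (pair_proj *m Y) =
    (r%:C)%C^-1 * \sum_i pair_vec i * (\sum_j Num.conj (pair_vec j) * Y j i).
  rewrite /mxtrace mulr_sumr; apply: eq_bigr => i _; rewrite !mxE !mulr_sumr.
  by apply: eq_bigr => j _; rewrite mxE; ring.
under eq_bigr do rewrite sum_pair_vecJM.
by rewrite sum_pair_vecM; congr (_ * _); ring.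
Qed.

End PairProjection.

Lemma hermitian_of_Im_tr_proj (Y : 'M[C]_n) :
  (forall P, P *m P = P -> ctrmx P = P -> Im (\tr (P *m Y)) = 0) -> ctrmx Y = Y.
Proof.
move=> Im_trPY.
have Im_pair k l a : (k != l) || (a == 0) ->
    Im (Y k k + a * Y k l + Num.conj a * Y l k + Num.conj a * a * Y l l) = 0.
  move=> kla; have := Im_trPY _ (pair_proj_idem kla) (pair_proj_herm k l a).
  rewrite tr_pair_projM -fmorphV Im_realCM => /eqP; rewrite mulf_eq0 invr_eq0.
  by case/orP=> /eqP // r0; have := abs2_ge0 a; lra.
have ImYkk k : Im (Y k k) = 0.
  by have := Im_pair k k 0; rewrite !eqxx orbT rmorph0 !mul0r !addr0; apply.
have sym_pair k l : k != l ->
    Im (Y k l) + Im (Y l k) = 0 /\ Re (Y k l) - Re (Y l k) = 0.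
  move=> kl; have := Im_pair k l 1; have := Im_pair k l 'i%C; rewrite kl.
  rewrite rmorph1 !mul1r !raddfD /= !ImM /= !ImYkk; lra.
apply/matrixP => k l; rewrite !mxE.
have [<-|lk] := eqVneq l k.
  by case: (Y l l) (ImYkk l) => x y /= ->; exact: conj_realC.
rewrite eq_sym in lk; have [Im_sym Re_sym] := sym_pair k l lk.
by case: (Y k l) (Y l k) Im_sym Re_sym => x1 y1 [x2 y2] /= ? ?; apply/eqP;
  rewrite eq_complex /=; apply/andP; split; apply/eqP; lra.
Qed.

End Bipartite.

Theorem proposition8 (R : realType) (d1 d2 : nat)
  (hd1 : (3 <= d1)%N) (hodd : odd d1)
  (sigma : 'I_(d1 * d2) -> R) (hsigma : forall k, 0 <= sigma k)
  (A : 'M[R[i]]_(d1 * d2)) :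
  local_minimizer sigma A ->
  is_hermitian (A *m ptrans2 (entconj A)).
Proof.
move=> minA; apply: hermitian_of_Im_tr_proj => P PP hermP.
exact: Im_tr_proj_eq0 minA PP hermP.
Qed.
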